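(* For every $m \in \mathbb{Z}_{>0}$, we have $h_s(m) \geq m(m-1)+1$; for $m\ge 2$ the right-hand side equals $h(1,m-1)$.
   Context: A real matrix is called totally $1$-submodular if every square submatrix (of every size) has determinant of absolute value at most $1$. For $t \in \mathbb{R}^m$ and $A\in\mathbb{R}^{m\times n}$ with columns $A_1,\dots,A_n$, $t+A$ denotes the matrix with columns $t+A_1,\dots,t+A_n$. The shifted Heller constant $h_s(m)$ is the maximum $n$ such that there exist $t \in [0,1)^m\setminus\{\mathbf 0\}$ and $A \in \{-1,0,1\}^{m\times n}$ with pairwise distinct columns such that $t+A$ is totally $1$-submodular. $h(1,k)$ denotes the maximum number of pairwise distinct columns of an integer matrix with $k$ rows whose $k\times k$ minors have maximum absolute value exactly $1$; by Heller's theorem $h(1,k)=k^2+k+1$. *)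

From HB Require Import structures.
From mathcomp Require Import all_boot all_order all_algebra.
From mathcomp Require Import reals.
Set Implicit Arguments. Unset Strict Implicit. Unset Printing Implicit Defensive.
Import Order.TTheory GRing.Theory Num.Theory.
Local Open Scope ring_scope.

(* A real matrix is totally 1-submodular if every square submatrix (of every
   size k, rows selected by an injective f, columns by an injective g) has
   determinant of absolute value at most 1.  Reordering rows/columns only
   changes the sign of the determinant, so injective selections describe
   exactly the square submatrices up to sign. *)
Definition totally_1_submodular (R : numDomainType) (m n : nat)
  (M : 'M[R]_(m, n)) : Prop :=
  forall (k : nat) (f : 'I_k -> 'I_m) (g : 'I_k -> 'I_n),
    injective f -> injective g -> `|\det (mxsub f g M)| <= 1.

Definition shift_mx (R : numDomainType) (m n : nat)
  (t : 'cV[R]_m) (A : 'M[int]_(m, n)) : 'M[R]_(m, n) :=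
  \matrix_(i, j) (t i 0 + (A i j)%:~R).

(* n is admissible in the definition of the shifted Heller constant h_s(m):
   there exist t in [0,1)^m \ {0} and A in {-1,0,1}^{m x n} with pairwise
   distinct columns such that t + A is totally 1-submodular. *)
Definition shifted_Heller_admissible (R : realType) (m n : nat) : Prop :=
  exists (t : 'cV[R]_m) (A : 'M[int]_(m, n)),
    [/\ (forall i, 0 <= t i 0 /\ t i 0 < 1),
        t != 0,
        (forall i j, `|A i j| <= 1),
        injective (fun j => col j A)
      & totally_1_submodular (shift_mx t A)].

From mathcomp Require Import all_boot all_order all_algebra.
From mathcomp Require Import reals.
From mathcomp Require Import perm zify.
Set Implicit Arguments. Unset Strict Implicit. Unset Printing Implicit Defensive.
Import Order.TTheory GRing.Theory Num.Theory.
Local Open Scope ring_scope.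

(* Heller's extremal configuration {0, +-e_i, e_i - e_j} in dimension m - 1
   has m(m - 1) + 1 distinct columns, each with at most one +1 and one -1, so
   all its minors are in {0, +-1}.  Put on top of it a row of -1's and shift
   that row by 1 - eps: the new row is -eps everywhere, so by the Leibniz
   formula any k x k minor through it is at most eps * k! <= 1, while minors
   avoiding it are minors of the incidence-like part. *)

Section PartialIncidence.
Variable R : numDomainType.

Definition partial_incidence_on m n (P : {pred 'I_m}) (M : 'M[R]_(m, n)) : Prop :=
  forall j, [/\ {in P, forall i, [\/ M i j = 0, M i j = 1 | M i j = -1]},
    {in P &, forall i1 i2, M i1 j = 1 -> M i2 j = 1 -> i1 = i2}
  & {in P &, forall i1 i2, M i1 j = -1 -> M i2 j = -1 -> i1 = i2}].

Lemma partial_incidence_mxsub m n k l P (M : 'M[R]_(m, n))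
    (f : 'I_k -> 'I_m) (g : 'I_l -> 'I_n) :
  injective f -> (forall i, f i \in P) -> partial_incidence_on P M ->
  partial_incidence_on predT (mxsub f g M).
Proof.
move=> f_inj fP MP j; have [M01 M1 MN1] := MP (g j).
split=> [i _ | i1 i2 _ _ | i1 i2 _ _]; rewrite !mxE.
- exact: M01.
- by move=> e1 e2; apply: f_inj; apply: M1 e1 e2.
- by move=> e1 e2; apply: f_inj; apply: MN1 e1 e2.
Qed.

Lemma partial_incidence_diff_pred1 m n P (M : 'M[R]_(m, n))
    (a b : 'I_n -> 'I_m) :
  {in P, forall i j, M i j = (i == a j)%:R - (i == b j)%:R} ->
  partial_incidence_on P M.
Proof.
move=> Mab j.
have one_neqN1 : (1 : R) != -1 by rewrite gt_eqF // (lt_trans (ltrN10 R) ltr01).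
split=> [i /Mab-> | i1 i2 /Mab-> /Mab-> | i1 i2 /Mab-> /Mab->].
- by case: (i == a j); case: (i == b j); rewrite ?subrr ?subr0 ?sub0r; constructor.
- suff eq_a i : (i == a j)%:R - (i == b j)%:R = 1 :> R -> i = a j.
    by move=> /eq_a-> /eq_a->.
  case: eqP => // _; case: (i == b j); rewrite sub0r ?oppr0 => /eqP.
    by rewrite eq_sym (negbTE one_neqN1).
  by rewrite eq_sym oner_eq0.
- suff eq_b i : (i == a j)%:R - (i == b j)%:R = -1 :> R -> i = b j.
    by move=> /eq_b-> /eq_b->.
  case: (i == a j); case: eqP => // _; rewrite ?subr0 ?subrr => /eqP.
    by rewrite (negbTE one_neqN1).
  by rewrite eq_sym oppr_eq0 oner_eq0.
Qed.

Lemma partial_incidence_norm_le1 m n P (M : 'M[R]_(m, n)) i j :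
  partial_incidence_on P M -> i \in P -> `|M i j| <= 1.
Proof.
by move=> MP Pi; have [M01 _ _] := MP j; case: (M01 i Pi) => ->;
  rewrite ?normr0 ?normrN ?normr1 ?ler01.
Qed.

(* With a +1 and a -1 in the column, these are its only nonzero entries. *)
Lemma partial_incidence_sum_col m n (M : 'M[R]_(m, n)) j i1 i2 :
  partial_incidence_on predT M -> i1 != i2 ->
  M i1 j != 0 -> M i2 j != 0 -> \sum_i M i j = 0.
Proof.
move=> MP ne12 nz1 nz2; have [M01 M1 MN1] := MP j.
have nz_cases i : M i j != 0 -> M i j = 1 \/ M i j = -1.
  by case: (M01 i isT) => ->; rewrite ?eqxx //; [left | right].
wlog [e1 e2] : i1 i2 ne12 {nz1 nz2} / M i1 j = 1 /\ M i2 j = -1.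
  move=> wlog_sum; case: (nz_cases _ nz1) (nz_cases _ nz2) => e1 [] e2.
  - by move: ne12; rewrite (M1 _ _ isT isT e1 e2) eqxx.
  - exact: (wlog_sum i1 i2).
  - by apply: (wlog_sum i2 i1); rewrite 1?eq_sym.
  - by move: ne12; rewrite (MN1 _ _ isT isT e1 e2) eqxx.
rewrite (bigD1 i1) // (bigD1 i2) 1?eq_sym //= big1 ?addr0 ?e1 ?e2 ?subrr //.
move=> i /andP[ne1 ne2]; case: (M01 i isT) => // e.
- by move: ne1; rewrite (M1 _ _ isT isT e e1) eqxx.
- by move: ne2; rewrite (MN1 _ _ isT isT e e2) eqxx.
Qed.

(* Either some column has at most one nonzero entry and we expand along it,
   or every column sums to zero and the rows are dependent. *)
Lemma partial_incidence_det k (M : 'M[R]_k) :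
  partial_incidence_on predT M -> `|\det M| <= 1.
Proof.
elim: k M => [|k IHk] M MP; first by rewrite det_mx00 normr1.
have [/existsP[j /forallP sparse_j] | dense] := boolP [exists j,
    [forall i1, forall i2, (i1 != i2) ==> (M i1 j == 0) || (M i2 j == 0)]];
  last first.
  suff /eqP-> : \det M == 0 by rewrite normr0.
  apply/det0P; exists (const_mx 1).
    by apply/eqP => /matrixP/(_ 0 0)/eqP; rewrite !mxE oner_eq0.
  apply/matrixP => i j; rewrite !mxE.
  move: dense; rewrite negb_exists => /forallP/(_ j)/forallPn[i1 /forallPn[i2]].
  rewrite negb_imply negb_or => /and3P[ne12 nz1 nz2].
  under eq_bigr do rewrite mxE mul1r.
  exact: partial_incidence_sum_col MP ne12 nz1 nz2.
rewrite (expand_det_col _ j).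
have [i0 nz0 | zero_col] := pickP (fun i => M i j != 0); last first.
  rewrite big1 ?normr0 // => i _.
  by move/negbFE: (zero_col i) => /eqP->; rewrite mul0r.
rewrite (bigD1 i0) //= big1 ?addr0 => [|i ne]; last first.
  move/forallP: (sparse_j i0) => /(_ i).
  by rewrite eq_sym ne (negbTE nz0) => /eqP->; rewrite mul0r.
rewrite normrM /cofactor normrM normrX normrN1 expr1n mul1r.
apply: mulr_ile1; rewrite ?normr_ge0 ?(partial_incidence_norm_le1 _ MP) //.
have -> : row' i0 (col' j M) = mxsub (lift i0) (lift j) M.
  by apply/matrixP => i i'; rewrite !mxE.
by apply/IHk/(partial_incidence_mxsub _ (@lift_inj _ i0)) => //.
Qed.

End PartialIncidence.

Section SmallRow.
Variable R : numDomainType.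

Lemma norm_det_small_row k (N : 'M[R]_k) (i0 : 'I_k) (c : R) :
  (forall j, `|N i0 j| <= c) -> (forall i j, `|N i j| <= 1) ->
  `|\det N| <= c * k`!%:R.
Proof.
move=> N_i0 N_le1; rewrite /determinant mulr_natr -card_Sn -sumr_const.
apply: le_trans (ler_norm_sum _ _ _) (ler_sum _ _) => s _.
rewrite normrM normrX normrN1 expr1n mul1r normr_prod (bigD1 i0) //=.
rewrite -[c]mulr1 ler_pM ?normr_ge0 ?prodr_ge0 ?prodr_ile1 //.
by move=> i _; rewrite normr_ge0 N_le1.
Qed.

(* Square submatrices through row [i0] have determinant at most [x * k`!];
   the others are submatrices of a partial incidence matrix. *)
Lemma totally_1_submodular_small_row m n (M : 'M[R]_(m, n)) i0 (x : R) :
  0 <= x -> x * m`!%:R <= 1 -> (forall j, `|M i0 j| <= x) ->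
  partial_incidence_on (predC1 i0) M -> totally_1_submodular M.
Proof.
move=> x_ge0 x_fact M_i0 MP k f g f_inj g_inj.
have [i f_i0 | f_ne_i0] := pickP (fun i => f i == i0); last first.
  apply/partial_incidence_det/(partial_incidence_mxsub _ f_inj _ MP) => i.
  by rewrite inE f_ne_i0.
have x_le1 : x <= 1.
  by apply: le_trans x_fact; rewrite ler_peMr // ler1n fact_gt0.
apply: le_trans (norm_det_small_row (i0 := i) (c := x) _ _) _.
- by move=> j; rewrite mxE (eqP f_i0).
- move=> i' j; rewrite mxE; have [-> | ne] := eqVneq (f i') i0.
    exact: le_trans (M_i0 _) x_le1.
  by apply: partial_incidence_norm_le1 MP _; rewrite inE ne.
apply: le_trans x_fact; rewrite ler_wpM2l // ler_nat leq_fact //.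
by have := leq_card f f_inj; rewrite !card_ord.
Qed.

End SmallRow.

Lemma eq_of_pred1_predC1 (T : eqType) (x0 a b : T) :
  {in predC1 x0, forall i, (i == a) = (i == b)} -> a = b.
Proof.
move=> eq_ab; have [a0 | a_ne] := eqVneq a x0; last first.
  by move: (eq_ab a); rewrite inE a_ne eqxx => /(_ isT)/esym/eqP.
have [// | b_ne] := eqVneq b x0; first by rewrite a0.
by move: (eq_ab b); rewrite inE b_ne eqxx a0 (negbTE b_ne) => /(_ isT).
Qed.

Section HellerConfiguration.
Variable m : nat.

(* Row [ord0] will carry the shift; on the other rows the pair [(a, b)] is
   the column e_a - e_b with e_ord0 = 0, so the columns are [0], [+-e_i] and
   [e_i - e_j], the m^2 + m + 1 columns of Heller's extremal configuration. *)
Definition heller_pairs : {set 'I_m.+1 * 'I_m.+1} :=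
  (ord0, ord0) |: [set p | p.1 != p.2].

Definition heller_col (p : 'I_m.+1 * 'I_m.+1) (i : 'I_m.+1) : int :=
  (i == p.1)%:R - (i == p.2)%:R.

Definition heller_mx : 'M[int]_(m.+1, #|heller_pairs|) :=
  \matrix_(i, j) if i == ord0 then -1 else heller_col (enum_val j) i.

Lemma card_heller_pairs : #|heller_pairs| = (m.+1 * m + 1)%N.
Proof.
have offdiag : [set p : 'I_m.+1 * 'I_m.+1 | p.1 != p.2] =
                ~: [set (i, i) | i in 'I_m.+1].
  apply/setP => -[a b]; rewrite !inE /=; congr negb.
  by apply/eqP/imsetP => [-> | [i _ [-> ->]] //]; exists b.
have := cardsC [set (i, i) | i in 'I_m.+1].
rewrite cardsU1 inE eqxx -offdiag card_imset => [|i j [] //].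
by rewrite card_prod card_ord mulnS => /addnI->; rewrite addnC.
Qed.

Lemma heller_col_eq_pm1 p i : p \in heller_pairs -> i != ord0 ->
  ((heller_col p i == 1) = (i == p.1)) * ((heller_col p i == -1) = (i == p.2)).
Proof.
case: p => a b; rewrite /heller_col !inE /= => /orP[/eqP[-> ->] i_ne | ne_ab _].
  by rewrite (negbTE i_ne).
have [-> | ne_ia] := eqVneq i a; first by rewrite (negbTE ne_ab).
by case: (i == b).
Qed.

Lemma heller_col_inj : {in heller_pairs &, forall p q,
  {in predC1 ord0, heller_col p =1 heller_col q} -> p = q}.
Proof.
move=> p q Hp Hq eq_pq.
have eq_pred1 : {in predC1 ord0, forall i,
    ((i == p.1) = (i == q.1)) * ((i == p.2) = (i == q.2))}.
  move=> i /[dup] i_ne1 /eq_pq eq_col; rewrite inE in i_ne1.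
  by rewrite -(heller_col_eq_pm1 Hp i_ne1).1 -(heller_col_eq_pm1 Hp i_ne1).2 eq_col
    (heller_col_eq_pm1 Hq i_ne1).1 (heller_col_eq_pm1 Hq i_ne1).2.
rewrite [p]surjective_pairing [q]surjective_pairing.
by congr pair; apply: (@eq_of_pred1_predC1 _ ord0) => i /eq_pred1[].
Qed.

Lemma injective_heller_cols : injective (fun j => col j heller_mx).
Proof.
move=> j1 j2 /matrixP eq_col; apply/enum_val_inj/heller_col_inj;
  rewrite ?enum_valP // => i; rewrite inE => i_ne.
by move: (eq_col i 0); rewrite !mxE (negbTE i_ne).
Qed.

End HellerConfiguration.

Section ShiftedHeller.
Variables (R : realType) (m : nat).

(* Row [ord0] of the shifted matrix is constantly [- heller_eps], which must
   satisfy [heller_eps * (m.+1)`! <= 1] and be in (0, 1) for the shift to be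
   nonzero; the [.+1] ensures [heller_eps < 1] even when m = 0. *)
Definition heller_eps : R := ((m.+1)`!.+1)%:R^-1.

Definition heller_shift : 'cV[R]_m.+1 :=
  \col_i (if i == ord0 then 1 - heller_eps else 0).

Lemma heller_eps_gt0 : 0 < heller_eps.
Proof. by rewrite invr_gt0 ltr0n. Qed.

Lemma heller_eps_lt1 : heller_eps < 1.
Proof. by rewrite invf_lt1 ?ltr0n // ltr1n ltnS fact_gt0. Qed.

Lemma heller_eps_fact : heller_eps * (m.+1)`!%:R <= 1.
Proof. by rewrite mulrC ler_pdivrMr ?ltr0n // mul1r ler_nat. Qed.

Lemma totally_1_submodular_heller :
  totally_1_submodular (shift_mx heller_shift (heller_mx m)).
Proof.
apply: (totally_1_submodular_small_row (i0 := ord0) (ltW heller_eps_gt0)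
  heller_eps_fact) => [j | ].
  by rewrite !mxE eqxx addrAC subrr add0r normrN gtr0_norm ?heller_eps_gt0.
apply: (partial_incidence_diff_pred1 (a := fun j => (enum_val j).1)
                                      (b := fun j => (enum_val j).2)).
move=> i i_ne j; rewrite inE in i_ne.
by rewrite !mxE (negbTE i_ne) add0r rmorphB /= !rmorph_nat.
Qed.

Lemma shifted_Heller_admissible_heller :
  shifted_Heller_admissible R m.+1 #|heller_pairs m|.
Proof.
have [eps_gt0 eps_lt1] := (heller_eps_gt0, heller_eps_lt1).
exists heller_shift, (heller_mx m); split.
- move=> i; rewrite mxE; case: ifP => _; last by rewrite lexx ltr01.
  by rewrite subr_ge0 ltW // ltrBlDr ltrDl.
- by apply/eqP => /matrixP/(_ ord0 0)/eqP; rewrite !mxE eqxx subr_eq0 eq_sym lt_eqF.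
- move=> i j; rewrite mxE; case: ifP => // _.
  by rewrite /heller_col; case: (i == _); case: (i == _).
- exact: injective_heller_cols.
- exact: totally_1_submodular_heller.
Qed.

End ShiftedHeller.

Theorem proposition2p6 (R : realType) (m : nat) (hm : (0 < m)%N) :
  (exists n : nat, (m * (m - 1) + 1 <= n)%N /\ shifted_Heller_admissible R m n)
  /\ ((2 <= m)%N -> m * (m - 1) + 1 = (m - 1) ^ 2 + (m - 1) + 1)%N.
Proof.
case: m hm => // m _; rewrite subSS subn0; split => [|_].
  exists #|heller_pairs m|; split; last exact: shifted_Heller_admissible_heller.
  by rewrite card_heller_pairs.
rewrite mulSn expnS expn1; lia.
Qed.
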